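(* Let $\mathcal M$ be a map and let $e\neq f$ be edges of $\mathcal M$. If $\mathcal M\setminus e/ f$ is defined (i.e. $e$ is not a bridge of $\mathcal M$ and $f$ is not a separating loop of $\mathcal M\setminus e$), then $\mathcal M/ f\setminus e$ is defined (i.e. $f$ is not a separating loop of $\mathcal M$ and $e$ is not a bridge of $\mathcal M/f$) and $\mathcal M\setminus e/ f=\mathcal M/ f\setminus e$.
   Context: A map is a triple $\mathcal M=(B,\sigma,\alpha)$ with $B$ finite, $\sigma,\alpha\in\mathrm{Sym}(B)$, $\alpha$ a fixed-point-free involution, and $\langle\sigma,\alpha\rangle$ transitive on $B$; permutations compose as functions. Edges are the cycles of $\alpha$, vertices the cycles of $\sigma$. The underlying graph $G(\mathcal M)$ has vertices the cycles of $\sigma$ and edges the cycles of $\alpha$, $e$ incident to $v$ iff $e\cap v\neq\emptyset$. The dual map is $\mathcal M^\ast=(B,\sigma\alpha,\alpha)$. A bridge of $\mathcal M$ is an edge $e$ with $G(\mathcal M)-e$ disconnected; a separating loop is an edge $e$ with $G(\mathcal M^\ast)-e$ disconnected. For $\mu\in\mathrm{Sym}(B)$ and $B'\subseteq B$, $\mu_{|B'}\in\mathrm{Sym}(B')$ is defined by $\mu_{|B'}(b)=\mu^k(b)$, $k$ least positive with $\mu^k(b)\in B'$. For an edge $e$ that is not a bridge, deletion is $\mathcal M\setminus e=(B\setminus e,\sigma_{|B\setminus e},\alpha_{|B\setminus e})$; for an edge $e$ that is not a separating loop, contraction is $\mathcal M/e=(B\setminus e,(\sigma\alpha)_{|B\setminus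 e}\,\alpha_{|B\setminus e},\alpha_{|B\setminus e})$. *)

(* Darts live in a fixed finite type T; a cmap is a
   triple (B, sigma, alpha) with B : {set T}, and sigma, alpha finite
   functions that act as permutations of B and as the identity outside B. *)
From mathcomp Require Import all_boot.
Set Implicit Arguments. Unset Strict Implicit. Unset Printing Implicit Defensive.

Section Maps.
Variable T : finType.

Record cmap := Map { darts : {set T}; sig : {ffun T -> T}; alp : {ffun T -> T} }.

(* mu restricted to B': b |-> mu^k b, k least positive with mu^k b \in B';
   identity outside B'. (For mu a permutation of a superset of B', such a
   k exists and is <= #|T|.) *)
Definition first_return (mu : {ffun T -> T}) (B' : {set T}) (b : T) : nat :=
  (find (fun k => iter k.+1 mu b \in B') (iota 0 #|T|)).+1.

Definition restr (mu : {ffun T -> T}) (B' : {set T}) : {ffun T -> T} :=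
  [ffun b => if b \in B' then iter (first_return mu B' b) mu b else b].

Definition comp (f g : {ffun T -> T}) : {ffun T -> T} := [ffun b => f (g b)].

Definition perm_on_set (B : {set T}) (mu : {ffun T -> T}) : bool :=
  [forall x, (x \notin B) ==> (mu x == x)] &&
  [forall x in B, mu x \in B] &&
  [forall x in B, forall y in B, (mu x == mu y) ==> (x == y)].

Definition transitive_on (B : {set T}) (r : rel T) : bool :=
  [forall x in B, forall y in B, connect r x y].

Definition is_map (M : cmap) : bool :=
  [&& perm_on_set (darts M) (sig M), perm_on_set (darts M) (alp M),
      [forall x in darts M, (alp M x != x) && (alp M (alp M x) == x)] &
      transitive_on (darts M) (fun x y => (y == sig M x) || (y == alp M x))].

Definition is_edge (M : cmap) (e : {set T}) : Prop :=
  exists2 b, b \in darts M & e = [set b; alp M b].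

(* G(M) - e is connected: vertices (sigma-cycles) joined by the edges
   (alpha-cycles) other than e; expressed on darts: a dart is linked to
   sigma of it (same vertex) and to alpha of it through an edge <> e. *)
Definition graph_minus_connected (B : {set T}) (s a : {ffun T -> T})
    (e : {set T}) : bool :=
  transitive_on B (fun x y => (x \in B) &&
                    ((y == s x) || ((x \notin e) && (y == a x)))).

Definition dual (M : cmap) : cmap := Map (darts M) (comp (sig M) (alp M)) (alp M).

Definition is_bridge (M : cmap) (e : {set T}) : bool :=
  ~~ graph_minus_connected (darts M) (sig M) (alp M) e.

Definition is_sep_loop (M : cmap) (e : {set T}) : bool := is_bridge (dual M) e.

Definition delete (M : cmap) (e : {set T}) : cmap :=
  let B' := darts M :\: e in Map B' (restr (sig M) B') (restr (alp M) B').

Definition contract (M : cmap) (e : {set T}) : cmap :=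
  let B' := darts M :\: e in
  Map B' (comp (restr (comp (sig M) (alp M)) B') (restr (alp M) B'))
         (restr (alp M) B').

End Maps.

From Pilot Require Import Defs. (* [comp] of Defs, not of ssrfun *)
From mathcomp Require Import all_boot.
Import Defs.
Set Implicit Arguments. Unset Strict Implicit. Unset Printing Implicit Defensive.

(* Deletion and contraction replace the rotations of a map by first-return
   maps [restr].  Let W act as sigma off f and as sigma \o alpha on f: the
   rotation of M/f is the first return of W to B - f, and restricting to A and
   then to A' \subset A is restricting to A'.  So M\e/f and M/f\e both have
   rotation the first return of W to B - (e U f), and alpha restricted there.

   A face step of M\e jumps over darts of e, none of which lies in f; with the
   transitivity of M this makes the dual of M minus f connected.  Hence no
   W-orbit stays inside f and, G(M) - e being connected, no sigma-orbit stays
   inside e.  The darts are then connected by W-steps and alpha-steps outside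
   e U f, and sending each dart of f to the next dart of its W-orbit outside f
   shows that G(M/f) - e is connected. *)

Section FirstReturn.

Variable T : finType.
Implicit Types (mu g h p : {ffun T -> T}) (A : {set T}) (x y : T).

(* [first_return mu A x] is meaningful only when [returns mu A x]. *)
Definition returns mu A x := exists n, iter n.+1 mu x \in A.

Definition next_in mu A x := iter (first_return mu A x) mu x.

Lemma first_return_spec mu A x : returns mu A x ->
  [/\ 0 < first_return mu A x, next_in mu A x \in A &
      forall i, 0 < i < first_return mu A x -> iter i mu x \notin A].
Proof.
case=> n hn; pose p k := iter k.+1 mu x \in A.
have fx : fconnect mu (mu x) (iter n.+1 mu x) by rewrite iterSr fconnect_iter.
have hp : has p (iota 0 #|T|).
  apply/hasP; exists (findex mu (mu x) (iter n.+1 mu x)).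
    by rewrite mem_iota (leq_trans (findex_max fx)) ?max_card.
  by rewrite /p iterSr iter_findex.
have find_lt : find p (iota 0 #|T|) < #|T| by rewrite -[X in _ < X](size_iota 0) -has_find.
rewrite /next_in /first_return; split=> //.
  by have := nth_find 0 hp; rewrite nth_iota.
case=> // i /andP[_]; rewrite ltnS => lt_i.
by have := before_find 0 lt_i; rewrite nth_iota ?(ltn_trans lt_i) // => /negbT.
Qed.

Lemma first_returnE mu A x k : 0 < k -> iter k mu x \in A ->
  (forall i, 0 < i < k -> iter i mu x \notin A) -> first_return mu A x = k.
Proof.
move=> k_gt0 kA k_min.
have ret : returns mu A x by exists k.-1; rewrite prednK.
have [fr_gt0 frA fr_min] := first_return_spec ret.
case: (ltngtP (first_return mu A x) k) => // [lt_fr_k | lt_k_fr].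
  by have := k_min _ (introT andP (conj fr_gt0 lt_fr_k)); rewrite frA.
by have := fr_min k; rewrite k_gt0 lt_k_fr kA => /(_ isT).
Qed.

Lemma next_in_mem mu A x : returns mu A x -> next_in mu A x \in A.
Proof. by case/first_return_spec. Qed.

Lemma next_in1 mu A x : mu x \in A -> next_in mu A x = mu x.
Proof. by move=> muxA; rewrite /next_in (@first_returnE _ _ _ 1) //; case=> [|[]]. Qed.

Lemma next_inS mu A x : returns mu A x -> mu x \notin A ->
  next_in mu A x = next_in mu A (mu x).
Proof.
move=> ret muxA; have [k_gt0 kA k_min] := first_return_spec ret.
have k_gt1 : 1 < first_return mu A x.
  rewrite ltn_neqAle k_gt0 andbT; apply: contra muxA => /eqP k1.
  by rewrite -[mu x]/(iter 1 mu x) k1.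
rewrite /next_in [in RHS](@first_returnE _ _ _ (first_return mu A x).-1).
- by rewrite -iterSr prednK // ltnW.
- by rewrite -ltnS prednK // ltnW.
- by rewrite -iterSr prednK // ltnW.
- by move=> i /andP[i_gt0 lt_i]; rewrite -iterSr k_min // -ltnS prednK // ltnW.
Qed.

Lemma returns_ind mu A (P : T -> Prop) :
  (forall x, mu x \in A -> P x) ->
  (forall x, returns mu A x -> mu x \notin A -> P (mu x) -> P x) ->
  forall x, returns mu A x -> P x.
Proof.
move=> base step x [n]; elim: n x => [|n IH] x hn; first exact: base.
have ret : returns mu A x by exists n.+1.
case: (boolP (mu x \in A)) => [/base // | muxA].
by apply: step => //; apply: IH; rewrite -iterSr.
Qed.

Lemma connect_next_in (r : rel T) mu A x : returns mu A x ->
  (forall w, w \notin A -> connect r w (mu w)) -> connect r (mu x) (next_in mu A x).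
Proof.
move=> ret r_mu; elim/returns_ind: x / ret => x; first by move/next_in1->; apply: connect0.
by move=> ret muxA IH; rewrite next_inS //; apply: connect_trans (r_mu _ muxA) IH.
Qed.

Lemma next_in_congr g h A x y : returns h A y -> g x = h y ->
  (forall z, z \notin A -> g z = h z) -> next_in g A x = next_in h A y.
Proof.
move=> ret gxy gh.
suff /(_ x gxy) [] : forall x, g x = h y ->
  returns g A x /\ next_in g A x = next_in h A y by [].
clear x gxy; elim/returns_ind: y / ret => y.
  by move=> hyA x gxy; split; [exists 0; rewrite /= gxy | rewrite !next_in1 ?gxy].
move=> ret hyA IH x gxy; rewrite (next_inS ret hyA).
have ggx : g (g x) = h (h y) by rewrite gxy gh.
have [[n gn] <-] := IH (g x) ggx.
have retx : returns g A x by exists n.+1; rewrite iterSr.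
by split; rewrite // next_inS ?gxy.
Qed.

Lemma returns_sub mu A A' x : A' \subset A -> returns mu A' x -> returns mu A x.
Proof. by move=> sA [n hn]; exists n; apply: (subsetP sA). Qed.

Lemma next_in_sub mu A A' x : A' \subset A -> returns mu A' x ->
  next_in mu A' x =
    if next_in mu A x \in A' then next_in mu A x else next_in mu A' (next_in mu A x).
Proof.
move=> sA; elim/returns_ind: x / => x.
  move=> muxA'; have muxA := subsetP sA _ muxA'.
  by rewrite (next_in1 muxA') (next_in1 muxA) muxA'.
move=> ret' muxA' IH; have ret := returns_sub sA ret'.
rewrite next_inS //; case: (boolP (mu x \in A)) => muxA.
  by rewrite (next_in1 muxA) (negbTE muxA').
by rewrite (next_inS ret).
Qed.

Lemma inj_iter mu k : injective mu -> injective (iter k mu).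
Proof. by move=> mu_inj; elim: k => // k IH x y /= /mu_inj /IH. Qed.

Lemma returns_in mu A x : injective mu -> x \in A -> returns mu A x.
Proof. by move=> mu_inj xA; exists (order mu x).-1; rewrite orderSpred iter_order. Qed.

Lemma returns_iter mu A x k :
  injective mu -> returns mu A x -> returns mu A (iter k mu x).
Proof.
move=> mu_inj; elim: k => // k IH /IH [[|n] hn] /=; first exact: returns_in.
by exists n; rewrite -iterSr.
Qed.

Lemma restr_out mu A x : x \notin A -> restr mu A x = x.
Proof. by rewrite ffunE => /negbTE->. Qed.

Lemma restr_in mu A x : x \in A -> restr mu A x = next_in mu A x.
Proof. by rewrite ffunE => ->. Qed.

Lemma restr_in1 mu A x : x \in A -> mu x \in A -> restr mu A x = mu x.
Proof. by move=> xA muxA; rewrite restr_in // next_in1. Qed.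

Lemma restr_mem mu A x : injective mu -> (restr mu A x \in A) = (x \in A).
Proof.
move=> mu_inj; case: (boolP (x \in A)) => xA; last by rewrite restr_out // (negbTE xA).
by rewrite restr_in // next_in_mem //; apply: returns_in.
Qed.

Definition act_on mu A := [ffun x => if x \in A then mu x else x].

Lemma restr_act_on mu A : {in A, forall x, mu x \in A} -> restr mu A = act_on mu A.
Proof.
move=> muA; apply/ffunP => x; rewrite [RHS]ffunE.
by case: ifP => xA; [exact: restr_in1 xA (muA x xA) | exact/restr_out/negbT].
Qed.

Lemma act_on_involutive mu A : involutive mu -> {mono mu : x / x \in A} ->
  involutive (act_on mu A).
Proof.
by move=> muK muA x; rewrite !ffunE; case xA: (x \in A); rewrite /= ?muA xA ?muK.
Qed.

Lemma restr_inj mu A : injective mu -> injective (restr mu A).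
Proof.
move=> mu_inj x y rxy.
have xyA : (x \in A) = (y \in A) by rewrite -(restr_mem A x mu_inj) rxy restr_mem.
case: (boolP (x \in A)) => xA; last by move: rxy; rewrite !restr_out // -xyA.
have yA : y \in A by rewrite -xyA.
move: rxy; rewrite !restr_in //; clear xyA.
wlog le_fr : x y xA yA / first_return mu A x <= first_return mu A y.
  move=> le_wlog; case: (leqP (first_return mu A x) (first_return mu A y)).
    exact: le_wlog.
  by move/ltnW => le E; symmetry; apply: le_wlog.
have [x_gt0 _ _] := first_return_spec (returns_in mu_inj xA).
have [_ _ y_min] := first_return_spec (returns_in mu_inj yA).
set d := first_return mu A y - first_return mu A x.
rewrite /next_in -(subnK le_fr) -/d addnC iterD => /(inj_iter mu_inj) xE.
case: (posnP d) => [d0 | d_gt0]; first by rewrite xE d0.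
have := y_min d; rewrite -xE xA d_gt0 /d ltn_subrL x_gt0 (leq_trans x_gt0 le_fr).
by move/(_ isT).
Qed.

Lemma restr_restr mu A A' : injective mu -> A' \subset A ->
  restr (restr mu A) A' = restr mu A'.
Proof.
move=> mu_inj sA; set nu := restr mu A; apply/ffunP => x.
case: (boolP (x \in A')) => xA'; last by rewrite !restr_out.
have nu_inj : injective nu by apply: restr_inj.
have nuE y : y \in A -> nu y = next_in mu A y by apply: restr_in.
rewrite !restr_in //.
suff : x \in A -> returns mu A' x -> next_in nu A' x = next_in mu A' x.
  by apply; [apply: (subsetP sA) | apply: returns_in].
move: (returns_in nu_inj xA'); clear xA'; elim/returns_ind: x / => y.
  by move=> nuyA' yA ret; rewrite next_in1 // (next_in_sub sA ret) -nuE // nuyA'.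
move=> ret_nu nuyA' IH yA ret.
rewrite (next_inS ret_nu nuyA') (next_in_sub sA ret) -nuE // (negbTE nuyA').
apply: IH; first by rewrite /nu restr_mem.
by rewrite nuE // /next_in; apply: returns_iter.
Qed.

Lemma restr_comp mu p A : injective mu -> {in A, forall x, p x \in A} ->
  (forall x, x \notin A -> p x = x) -> restr (comp mu p) A = comp (restr mu A) p.
Proof.
move=> mu_inj pA p_out; apply/ffunP => x; rewrite [RHS]ffunE.
case: (boolP (x \in A)) => xA; last by rewrite p_out // !restr_out.
rewrite !restr_in ?pA //; apply: next_in_congr; first exact: returns_in (pA x xA).
  by rewrite ffunE.
by move=> z zA; rewrite ffunE p_out.
Qed.

End FirstReturn.

Section Maps.

Variable T : finType.
Implicit Types (r : rel T) (B C e f : {set T}) (mu W a : {ffun T -> T}).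

Lemma perm_on_setP B mu :
  reflect [/\ forall x, x \notin B -> mu x = x, {in B, forall x, mu x \in B} &
              {in B &, injective mu}]
          (perm_on_set B mu).
Proof.
apply: (iffP andP) => [[/andP[/forallP out /forall_inP mem] /forall_inP inj] |
                        [out mem inj]].
  split=> [x xB | // | x y xB yB /eqP].
    exact/eqP/(implyP (out x)).
  by move/implyP: (forall_inP (inj x xB) y yB) => hxy /hxy/eqP.
split; first (apply/andP; split).
- by apply/forallP => x; apply/implyP => /out ->.
- exact/forall_inP.
- apply/forall_inP => x xB; apply/forall_inP => y yB.
  by apply/implyP => /eqP/inj ->.
Qed.

Lemma perm_on_set_out B mu x : perm_on_set B mu -> x \notin B -> mu x = x.
Proof. by case/perm_on_setP => out _ _; apply: out. Qed.

Lemma perm_on_set_mem B mu x : perm_on_set B mu -> (mu x \in B) = (x \in B).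
Proof.
case/perm_on_setP => out mem _; case: (boolP (x \in B)) => xB; first exact: mem.
by rewrite out // (negbTE xB).
Qed.

Lemma perm_on_set_inj B mu : perm_on_set B mu -> injective mu.
Proof.
move=> mu_perm x y; have [out _ inj] := perm_on_setP _ _ mu_perm.
case: (boolP (x \in B)) => xB; case: (boolP (y \in B)) => yB.
- exact: inj.
- by move=> E; have := perm_on_set_mem x mu_perm; rewrite E out // (negbTE yB) xB.
- by move=> E; have := perm_on_set_mem y mu_perm; rewrite -E out // (negbTE xB) yB.
- by rewrite !out.
Qed.

Lemma perm_on_set_restr C mu : injective mu -> perm_on_set C (restr mu C).
Proof.
move=> mu_inj; apply/perm_on_setP.
by split=> [x /restr_out // | x xC | x y _ _]; [rewrite restr_mem | apply: restr_inj].
Qed.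

Definition contract_rot (s a : {ffun T -> T}) f := comp s (act_on a f).

Lemma contract_sig (M : cmap T) f :
  injective (sig M) -> perm_on_set (darts M) (alp M) -> involutive (alp M) ->
  {mono alp M : x / x \in f} ->
  sig (contract M f) = restr (contract_rot (sig M) (alp M) f) (darts M :\: f).
Proof.
case: M => B s a /= s_inj a_perm aK fa.
have aBf : {in B :\: f, forall x, a x \in B :\: f}.
  by move=> x; rewrite !inE fa (perm_on_set_mem _ a_perm).
have sa_inj : injective (comp s a).
  by move=> x y; rewrite !ffunE => /s_inj /(can_inj aK).
rewrite (restr_act_on aBf) -restr_comp //; last first.
- by move=> x xBf; rewrite ffunE (negbTE xBf).
- by move=> x xBf; rewrite ffunE xBf aBf.
congr restr; apply/ffunP => x; rewrite !ffunE inE.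
case: (boolP (x \in f)) => //= xf; case: (boolP (x \in B)) => xB; first by rewrite aK.
by rewrite (perm_on_set_out a_perm).
Qed.

Lemma transitive_onP B r :
  reflect {in B &, forall x y, connect r x y} (transitive_on B r).
Proof.
apply: (iffP forall_inP) => [conn x y xB yB | conn x xB].
  exact: (forall_inP (conn x xB)).
by apply/forall_inP => y yB; apply: conn.
Qed.

Lemma homo_connect r r' (p : T -> T) :
  (forall u v, r u v -> connect r' (p u) (p v)) ->
  forall x y, connect r x y -> connect r' (p x) (p y).
Proof.
move=> rp x _ /connectP[q rq ->]; elim: q x rq => /= [x _ | v q IH x /andP[xv qv]].
  exact: connect0.
exact: connect_trans (rp _ _ xv) (IH _ qv).
Qed.

Lemma connect_exit r (mu : T -> T) (C : {pred T}) x y :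
  (forall u v, u \in C -> r u v -> v = mu u) ->
  connect r x y -> y \notin C -> exists n, iter n mu x \notin C.
Proof.
move=> r_mu /connectP[q rq ->]; elim: q x rq => /= [x _ xC | v q IH x /andP[xv qv] yC].
  by exists 0.
case: (boolP (x \in C)) => xC; last by exists 0.
have [n vn] := IH _ qv yC; exists n.+1.
by rewrite iterSr -(r_mu _ _ xC xv).
Qed.

Lemma graph_minus_connected_contract B f e W a :
  {in B, forall x, returns W (B :\: f) x} -> {in B :\: f, forall x, a x \in B :\: f} ->
  graph_minus_connected B W a (e :|: f) ->
  graph_minus_connected (B :\: f) (restr W (B :\: f)) (restr a (B :\: f)) e.
Proof.
set A := B :\: f => W_ret aA /transitive_onP conn.
(* Under p, every step of the first graph becomes at most one step of the second. *)
pose p x := if x \in A then x else next_in W A x.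
have pW x : returns W A x -> p (W x) = next_in W A x.
  move=> ret; rewrite /p; case: (boolP (W x \in A)) => WxA.
    by rewrite next_in1.
  by rewrite (next_inS ret).
apply/transitive_onP => x y xA yA.
have AB : {subset A <= B} by apply/subsetP/subsetDl.
have conn_xy := conn x y (AB x xA) (AB y yA).
have [px py] : p x = x /\ p y = y by rewrite /p xA yA.
rewrite -px -py.
apply: (homo_connect (p := p)) conn_xy => u v /andP[uB /orP[/eqP-> | /andP[uef /eqP->]]].
  rewrite (pW u (W_ret u uB)); case: (boolP (u \in A)) => uA.
    by apply: connect1; rewrite /p uA /= uA restr_in // eqxx.
  by rewrite /p (negbTE uA); apply: connect0.
move: uef; rewrite inE negb_or => /andP[ue uf].
have uA : u \in A by rewrite inE uf.
rewrite /p uA aA //; apply: connect1.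
by rewrite /= uA ue (restr_in1 uA (aA u uA)) eqxx orbT.
Qed.

End Maps.

Section DeleteContract.

Variables (T : finType) (B e f : {set T}) (s a : {ffun T -> T}).
Hypotheses (s_perm : perm_on_set B s) (a_perm : perm_on_set B a) (aK : involutive a).
Hypotheses (eB : e \subset B) (fB : f \subset B).
Hypotheses (ea : {mono a : x / x \in e}) (fa : {mono a : x / x \in f}).
Hypothesis ef : [disjoint e & f].

Local Notation W := (contract_rot s a f).

Let s_inj : injective s := perm_on_set_inj s_perm.

Let e_notin_f x : x \in e -> x \notin f.
Proof. by move=> xe; rewrite (disjointFr ef xe). Qed.

Let a_Be x : (a x \in B :\: e) = (x \in B :\: e).
Proof. by rewrite !inE ea (perm_on_set_mem _ a_perm). Qed.

Let W_in x : x \in f -> W x = s (a x).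
Proof. by move=> xf; rewrite /contract_rot !ffunE xf. Qed.

Let W_out x : x \notin f -> W x = s x.
Proof. by move=> xf; rewrite /contract_rot !ffunE (negbTE xf). Qed.

Let act_fK : involutive (act_on a f) := act_on_involutive aK fa.

Let W_inj : injective W.
Proof.
move=> x y; rewrite /contract_rot [comp _ _ x]ffunE [comp _ _ y]ffunE => /s_inj.
exact: (can_inj act_fK).
Qed.

Let iter_W_mem n x : (iter n W x \in B) = (x \in B).
Proof.
elim: n => //= n <-; rewrite /contract_rot ffunE (perm_on_set_mem _ s_perm) ffunE.
by case: ifP => // _; rewrite (perm_on_set_mem _ a_perm).
Qed.

Let exit_returns (C : {set T}) x n :
  x \in C -> x \in B -> iter n W x \notin C -> returns W (B :\: C) x.
Proof.
case: n => [/= xC _ /negP // | n xC xB nC].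
by exists n; rewrite inE nC iter_W_mem.
Qed.

Lemma dual_minus_f_connected :
  transitive_on B (fun x y => (y == s x) || (y == a x)) ->
  graph_minus_connected (B :\: e) (comp (restr s (B :\: e)) (restr a (B :\: e)))
    (restr a (B :\: e)) f ->
  graph_minus_connected B (comp s a) a f.
Proof.
move=> /transitive_onP conn_M /transitive_onP conn_f.
pose R : rel T := fun x y => (x \in B) && ((y == comp s a x) || (x \notin f) && (y == a x)).
have R_sa x : x \in B -> connect R x (s (a x)).
  by move=> xB; apply: connect1; rewrite /R xB ffunE eqxx.
have R_a x : x \in B -> x \notin f -> connect R x (a x).
  by move=> xB xf; apply: connect1; rewrite /R xB xf eqxx orbT.
have R_s x : x \in B -> x \notin f -> connect R x (s x).
  move=> xB xf; apply: connect_trans (R_a x xB xf) _.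
  by rewrite -{2}(aK x); apply: R_sa; rewrite (perm_on_set_mem _ a_perm).
have R_Be : {in B :\: e &, forall x y, connect R x y}.
  move=> x y xBe yBe; apply: connect_sub (conn_f x y xBe yBe) => u v /andP[uBe].
  have uB : u \in B by case/setDP: uBe.
  rewrite ffunE (restr_in1 uBe) ?a_Be // => /orP[/eqP-> | /andP[uf /eqP->]].
    rewrite restr_in ?a_Be //; apply: connect_trans (R_sa u uB) (connect_next_in _ _).
      by apply: returns_in; rewrite ?a_Be.
    move=> w; case: (boolP (w \in B)) => wB; last by rewrite (perm_on_set_out s_perm wB).
    by rewrite inE wB andbT negbK => /e_notin_f; apply: R_s.
  exact: R_a.
have R_aa x : x \in B -> connect R x (a x).
  move=> xB; case: (boolP (x \in f)) => xf; last exact: R_a.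
  have xBe : x \in B :\: e by rewrite inE xB andbT; apply: contraL xf; apply: e_notin_f.
  by apply: R_Be; rewrite ?a_Be.
apply/transitive_onP => x y xB yB.
apply: connect_sub (conn_M x y xB yB) => u v /orP[] /eqP->.
  case: (boolP (u \in B)) => uB; last by rewrite (perm_on_set_out s_perm uB).
  apply: connect_trans (R_aa u uB) _.
  by rewrite -{2}(aK u); apply: R_sa; rewrite (perm_on_set_mem _ a_perm).
case: (boolP (u \in B)) => uB; last by rewrite (perm_on_set_out a_perm uB).
exact: R_aa.
Qed.

(* A W-orbit inside f would be a face of M cut off from e in the dual minus f. *)
Lemma contract_rot_returns x0 : x0 \in e ->
  graph_minus_connected B (comp s a) a f -> {in B, forall x, returns W (B :\: f) x}.
Proof.
move=> x0e /transitive_onP conn x xB.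
case: (boolP (x \in f)) => xf; last by apply: returns_in; rewrite // inE xf.
have x0B : x0 \in B by apply: (subsetP eB).
have [|n nf] := connect_exit (mu := W) _ (conn x x0 xB x0B) (e_notin_f x0e).
  by move=> u v uf /andP[_ /orP[/eqP-> | /andP[/negP //]]]; rewrite W_in // ffunE.
exact: exit_returns nf.
Qed.

Lemma contract_rot_connected x0 : x0 \in f ->
  graph_minus_connected B s a e ->
  graph_minus_connected (B :\: e) (comp (restr s (B :\: e)) (restr a (B :\: e)))
    (restr a (B :\: e)) f ->
  graph_minus_connected B W a (e :|: f).
Proof.
move=> x0f /transitive_onP conn_e /transitive_onP conn_f.
pose R : rel T := fun x y => (x \in B) && ((y == W x) || (x \notin e :|: f) && (y == a x)).
have R_W x : connect R x (W x).
  case: (boolP (x \in B)) => xB; first by apply: connect1; rewrite /R xB eqxx.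
  by rewrite W_out ?(perm_on_set_out s_perm) //; apply: contra xB; apply: (subsetP fB).
have R_fconnect x y : fconnect W x y -> connect R x y.
  by apply: connect_sub => u v /eqP <-.
have R_sa x : x \in B -> x \notin e -> connect R x (s (a x)).
  move=> xB xe; case: (boolP (x \in f)) => xf; first by rewrite -W_in.
  apply: (@connect_trans _ R (a x)).
    by apply: connect1; rewrite /R xB inE negb_or xe xf eqxx orbT.
  by rewrite -W_out ?fa.
have R_Be : {in B :\: e &, forall x y, connect R x y}.
  move=> x y xBe yBe; apply: connect_sub (conn_f x y xBe yBe) => u v /andP[uBe].
  have [uB ue] := setDP uBe.
  rewrite ffunE (restr_in1 uBe) ?a_Be // => /orP[/eqP-> | /andP[uf /eqP->]].
    rewrite restr_in ?a_Be //; apply: connect_trans (R_sa u uB ue) (connect_next_in _ _).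
      by apply: returns_in; rewrite ?a_Be.
    move=> w wBe; rewrite -W_out //; apply: contra wBe => wf.
    by rewrite inE (subsetP fB) // andbT; apply: contraL wf; apply: e_notin_f.
  by apply: connect1; rewrite /R uB inE negb_or ue uf eqxx orbT.
pose lift x := if x \in e then next_in W (B :\: e) x else x.
(* The vertex of a dart of e has a dart outside e, as G(M) - e is connected. *)
have lift_mem x : x \in B -> lift x \in B :\: e.
  rewrite /lift; case: ifP => xe xB; last by rewrite inE xe.
  apply: next_in_mem; have x0B : x0 \in B by apply: (subsetP fB).
  have x0e : x0 \notin e := contraL (@e_notin_f x0) x0f.
  have [|n ne] := connect_exit (mu := W) _ (conn_e x x0 xB x0B) x0e.
    move=> u v ue /andP[_ /orP[/eqP-> | /andP[/negP //]]].
    by rewrite W_out // e_notin_f.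
  exact: exit_returns ne.
have lift_fconnect x : fconnect W x (lift x) /\ fconnect W (lift x) x.
  rewrite /lift; case: ifP => _; last by split; apply: connect0.
  have fx : fconnect W x (next_in W (B :\: e) x) by apply: fconnect_iter.
  by split; rewrite // fconnect_sym.
apply/transitive_onP => x y xB yB.
apply: connect_trans (R_fconnect _ _ (lift_fconnect x).1) _.
apply: connect_trans (R_Be _ _ (lift_mem x xB) (lift_mem y yB)) _.
exact: R_fconnect (lift_fconnect y).2.
Qed.

Lemma contract_deleteC :
  contract (delete (Map B s a) e) f = delete (contract (Map B s a) f) e.
Proof.
have cmapE (M : cmap T) : M = Map (darts M) (sig M) (alp M) by case: M.
have a_inj : injective a := can_inj aK.
have a_Be' : {in B :\: e, forall x, a x \in B :\: e} by move=> x; rewrite a_Be.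
have f_Be : {subset f <= B :\: e}.
  by move=> x xf; rewrite inE (subsetP fB) // andbT; apply: contraL xf; apply: e_notin_f.
transitivity (Map (B :\: e :\: f) (restr W (B :\: e :\: f)) (restr a (B :\: e :\: f))).
  rewrite [LHS]cmapE contract_sig /=; first last.
  - by move=> x; rewrite (restr_act_on a_Be') ffunE; case: ifP => // /a_Be'; rewrite fa.
  - by rewrite (restr_act_on a_Be'); apply: act_on_involutive; [| move=> x; rewrite a_Be].
  - exact: perm_on_set_restr.
  - exact: restr_inj.
  rewrite /contract_rot; have -> : act_on (restr a (B :\: e)) f = act_on a f.
    apply/ffunP => x; rewrite [LHS]ffunE [RHS]ffunE; case: ifP => // xf.
    by rewrite restr_in1 ?a_Be ?f_Be.
  rewrite -restr_comp //; last first.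
  - by move=> x xBe; rewrite ffunE; case: ifP => // xf; case/negP: xBe; apply: f_Be.
  - by move=> x xBe; rewrite ffunE; case: ifP => // _; apply: a_Be'.
  by rewrite !restr_restr // subsetDl.
rewrite /delete contract_sig //=.
have -> : B :\: f :\: e = B :\: e :\: f by rewrite !setDDl setUC.
by rewrite !restr_restr // ?subsetDl // setSD // subsetDl.
Qed.

End DeleteContract.

Section Edges.

Variables (T : finType) (a : {ffun T -> T}).
Hypothesis aK : involutive a.

Lemma edge_rep b x : x \in [set b; a b] -> [set b; a b] = [set x; a x].
Proof. by rewrite !inE => /orP[] /eqP-> //; rewrite aK setUC. Qed.

Lemma edge_mono b : {mono a : x / x \in [set b; a b]}.
Proof. by move=> x; rewrite !inE (can2_eq aK aK) (inj_eq (can_inj aK)) orbC. Qed.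

Lemma edge_sub B b : perm_on_set B a -> b \in B -> [set b; a b] \subset B.
Proof.
move=> a_perm bB; apply/subsetP => x; rewrite !inE => /orP[] /eqP->//.
by rewrite (perm_on_set_mem _ a_perm).
Qed.

Lemma edges_disjoint b c :
  [set b; a b] != [set c; a c] -> [disjoint [set b; a b] & [set c; a c]].
Proof.
move=> neq; rewrite disjoint_subset; apply/subsetP => x xe; apply/negP => xf.
by case/eqP: neq; rewrite (edge_rep xe) (edge_rep xf).
Qed.

End Edges.

Theorem lemma6 (T : finType) (M : cmap T) (e f : {set T}) :
  is_map M -> is_edge M e -> is_edge M f -> e != f ->
  ~~ is_bridge M e -> ~~ is_sep_loop (delete M e) f ->
  [/\ ~~ is_sep_loop M f, is_edge (contract M f) e,
      ~~ is_bridge (contract M f) e &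
      contract (delete M e) f = delete (contract M f) e].
Proof.
case: M => B s a; rewrite /is_map /is_edge /is_sep_loop /is_bridge /= !negbK.
move=> /and4P[s_perm a_perm /forall_inP a_inv conn_M] [be beB eE] [bf bfB fE] nef.
move=> conn_e conn_f.
have aK : involutive a.
  move=> x; case: (boolP (x \in B)) => xB; first by case/andP: (a_inv x xB) => _ /eqP.
  by rewrite !(perm_on_set_out a_perm).
have [eB fB] : e \subset B /\ f \subset B by rewrite eE fE !(edge_sub a_perm).
have [ea fa] : {mono a : x / x \in e} /\ {mono a : x / x \in f}.
  by rewrite eE fE; split; apply: edge_mono.
have ef : [disjoint e & f] by rewrite eE fE edges_disjoint // -eE -fE.
have [be_e bf_f] : be \in e /\ bf \in f by rewrite eE fE !set21.
have s_inj := perm_on_set_inj s_perm.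
have conn_dual := dual_minus_f_connected s_perm a_perm aK ea ef conn_M conn_f.
have W_ret := contract_rot_returns s_perm a_perm aK eB fa ef be_e conn_dual.
have conn_ef := contract_rot_connected s_perm a_perm aK fB ea fa ef bf_f conn_e conn_f.
split=> //.
- exists be; first by rewrite inE (disjointFr ef be_e) beB.
  by rewrite restr_in1 // !inE ?fa (disjointFr ef be_e) ?(perm_on_set_mem _ a_perm).
- have := contract_sig (M := Map B s a) s_inj a_perm aK fa; rewrite /= => ->.
  apply: graph_minus_connected_contract W_ret _ conn_ef.
  by move=> x; rewrite !inE fa (perm_on_set_mem _ a_perm).
- exact: contract_deleteC s_perm a_perm aK fB ea fa ef.
Qed.
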